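(* Let $A$ be a locally-complex Cayley--Dickson algebra and $f(x)\in A[x]$. Then every root in $A$ of $f'(x)$ is contained in the Gauss--Lucas snail $\mathrm{sn}(f)$.
   Context: Real Cayley--Dickson algebras: $A_0=\mathbb{R}$ with identity involution, $A_{k+1}=A_k\{\gamma_k\}=A_k\times A_k$ with product $(a,b)(c,d)=(ac+\gamma_k\bar d b,\ da+b\bar c)$ and involution $\overline{(a,b)}=(\bar a,-b)$. A real unital algebra is locally-complex if every non-real element generates a subalgebra isomorphic to $\mathbb{C}$ (for Cayley--Dickson algebras: all $\gamma_k=-1$ up to isomorphism). Trace $\mathrm{tr}(\lambda)=\lambda+\bar\lambda$, norm $\mathrm{n}(\lambda)=\bar\lambda\lambda$; $\langle\cdot,\cdot\rangle$ is the Euclidean inner product with $\langle a,a\rangle=\mathrm{n}(a)$. For $I$ with trace $0$ and norm $1$, $\mathbb{C}_I=\mathbb{R}+\mathbb{R}I\cong\mathbb{C}$ and $\pi_I:A\to\mathbb{C}_I$ is the orthogonal projection. $A[x]=A\otimes_{\mathbb{R}}\mathbb{R}[x]$ with central $x$; for $f(x)=\sum_k a_kx^k$, $f_I(x)=\sum_k\pi_I(a_k)x^k\in\mathbb{C}_I[x]$; substitution $f(r)=\sum_k a_k(r^k)$; formal derivative $f'(x)=\sum_k ka_kx^{k-1}$. If $f_I$ is non-constant, $K_{\mathbb{C}_I}(f_I)$ is the convex hull in $\mathbb{C}_I$ of the roots of $f_I$ in $\mathbb{C}_I$; otherwise $K_{\mathbb{C}_I}(f_I)=\mathbb{C}_I$.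 The Gauss--Lucas snail is $\mathrm{sn}(f)=\bigcup_I K_{\mathbb{C}_I}(f_I)$, the union over all $I\in A$ with $\mathrm{tr}(I)=0$, $\mathrm{n}(I)=1$. *)

(* Real Cayley--Dickson algebras with all gamma_k = -1. *)
From mathcomp Require Import all_boot all_order all_algebra.
From mathcomp Require Import reals.
Set Implicit Arguments. Unset Strict Implicit. Unset Printing Implicit Defensive.
Import Order.TTheory GRing.Theory Num.Theory.
Local Open Scope ring_scope.

Section CayleyDickson.
Variable R : realType.

Fixpoint CD (n : nat) : Type :=
  match n with 0 => R | k.+1 => (CD k * CD k)%type end.

Fixpoint cdreal (n : nat) (r : R) : CD n :=
  match n return CD n with 0 => r | k.+1 => (cdreal k r, cdreal k 0) end.

Definition cdzero n : CD n := cdreal n 0.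
Definition cdone n : CD n := cdreal n 1.

Fixpoint cdadd (n : nat) : CD n -> CD n -> CD n :=
  match n return CD n -> CD n -> CD n with
  | 0 => fun a b => a + b
  | k.+1 => fun x y => (cdadd x.1 y.1, cdadd x.2 y.2)
  end.

Fixpoint cdopp (n : nat) : CD n -> CD n :=
  match n return CD n -> CD n with
  | 0 => fun a => - a
  | k.+1 => fun x => (cdopp x.1, cdopp x.2)
  end.

Fixpoint cdscale (n : nat) (r : R) : CD n -> CD n :=
  match n return CD n -> CD n with
  | 0 => fun a => r * a
  | k.+1 => fun x => (cdscale r x.1, cdscale r x.2)
  end.

Fixpoint cdconj (n : nat) : CD n -> CD n :=
  match n return CD n -> CD n with
  | 0 => fun a => a
  | k.+1 => fun x => (cdconj x.1, cdopp x.2)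
  end.

(* (a,b)(c,d) = (ac + gamma conj(d) b, da + b conj(c)) with gamma = -1 *)
Fixpoint cdmul (n : nat) : CD n -> CD n -> CD n :=
  match n return CD n -> CD n -> CD n with
  | 0 => fun a b => a * b
  | k.+1 => fun x y =>
      (cdadd (cdmul x.1 y.1) (cdopp (cdmul (cdconj y.2) x.2)),
       cdadd (cdmul y.2 x.1) (cdmul x.2 (cdconj y.1)))
  end.

Fixpoint cdinner (n : nat) : CD n -> CD n -> R :=
  match n return CD n -> CD n -> R with
  | 0 => fun a b => a * b
  | k.+1 => fun x y => cdinner x.1 y.1 + cdinner x.2 y.2
  end.

Definition cdtr n (a : CD n) : CD n := cdadd a (cdconj a).
Definition cdnorm n (a : CD n) : CD n := cdmul (cdconj a) a.

Definition imag_unit n (I : CD n) : Prop :=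
  cdtr I = cdzero n /\ cdnorm I = cdone n.

Definition in_CI n (I z : CD n) : Prop :=
  exists a b : R, z = cdadd (cdreal n a) (cdscale b I).

(* orthogonal projection onto C_I (1 and I are orthonormal when I is an
   imaginary unit) *)
Definition proj_CI n (I a : CD n) : CD n :=
  cdadd (cdscale (cdinner a (cdone n)) (cdone n)) (cdscale (cdinner a I) I).

Fixpoint cdpow n (r : CD n) (k : nat) : CD n :=
  match k with 0 => cdone n | k'.+1 => cdmul r (cdpow r k') end.

(* polynomials in A[x] as coefficient lists [a_0; a_1; ...] *)
Definition cdeval n (f : seq (CD n)) (r : CD n) : CD n :=
  \big[@cdadd n/cdzero n]_(i < size f) cdmul (nth (cdzero n) f i) (cdpow r i).

Definition cdderiv n (f : seq (CD n)) : seq (CD n) :=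
  mkseq (fun k => cdscale (k.+1)%:R (nth (cdzero n) f k.+1)) (size f).-1.

Definition polyI n (I : CD n) (f : seq (CD n)) : seq (CD n) :=
  map (proj_CI I) f.

Definition nonconstant n (g : seq (CD n)) : Prop :=
  exists k, (0 < k)%N /\ nth (cdzero n) g k <> cdzero n.

Definition in_convex_hull n (P : CD n -> Prop) (z : CD n) : Prop :=
  exists (k : nat) (w : 'I_k -> R) (p : 'I_k -> CD n),
    (forall i, 0 <= w i) /\ (forall i, P (p i)) /\
    \sum_(i < k) w i = 1 /\
    z = \big[@cdadd n/cdzero n]_(i < k) cdscale (w i) (p i).

Definition K_CI n (I : CD n) (f : seq (CD n)) (z : CD n) : Prop :=
  let fI := polyI I f in
  (nonconstant fI /\
     in_convex_hull (fun y => in_CI I y /\ cdeval fI y = cdzero n) z)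
  \/ (~ nonconstant fI /\ in_CI I z).

Definition snail n (f : seq (CD n)) (z : CD n) : Prop :=
  exists I : CD n, imag_unit I /\ K_CI I f z.
End CayleyDickson.

(* Write r = a + b J with J an imaginary unit, i.e. r = embC J z for some complex z.
   As J^2 = -1, embC J is a ring isomorphism from C onto C_J, and the coordinates
   coordC J a = <a, 1> + i <a, J>, for which pi_J = embC J \o coordC J, satisfy
   coordC J (a * embC J w) = coordC J a * w: right multiplication by u is adjoint to
   right multiplication by conj u, and J conj J = 1.  Hence f(r) and f'(r) have
   coordinates f_J(z) and f_J'(z), so f'(r) = 0 forces f_J'(z) = 0, the classical
   Gauss-Lucas theorem puts z in the convex hull of the roots of f_J in C, and embC J
   carries that hull onto K_{C_J}(f_J). *)

From mathcomp Require Import all_boot all_order all_algebra.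
From mathcomp Require Import reals complex ring lra.
Set Implicit Arguments. Unset Strict Implicit. Unset Printing Implicit Defensive.
Import Order.TTheory GRing.Theory Num.Theory.
Local Open Scope ring_scope.

Section GaussLucas.
Variable C : numClosedFieldType.
Implicit Types (P : C -> Prop) (s : seq C) (p : {poly C}) (z : C).

Definition in_hull P z : Prop :=
  exists k (w : 'I_k -> C) (zeta : 'I_k -> C),
    (forall i, 0 <= w i) /\ (forall i, P (zeta i)) /\
    \sum_(i < k) w i = 1 /\ z = \sum_(i < k) w i * zeta i.

Lemma in_hull_point P z : P z -> in_hull P z.
Proof.
move=> Pz; exists 1%N, (fun _ => 1), (fun _ => z).
by rewrite !big_ord1 mul1r ler01.
Qed.

Lemma in_hull_balanced P s (m : C -> C) z :
  (forall x, x \in s -> P x) -> (forall x, x \in s -> 0 < m x) -> s != [::] ->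
  \sum_(x <- s) m x * (z - x) = 0 -> in_hull P z.
Proof.
move=> Ps m_gt0 s_neq0 balanced.
have M_gt0 : 0 < \sum_(x <- s) m x.
  case: s s_neq0 m_gt0 {Ps balanced} => // x s _ hm.
  rewrite big_cons ltr_pwDl ?hm ?mem_head // big_seq sumr_ge0 // => y ys.
  by rewrite ltW ?hm // inE ys orbT.
set M := \sum_(x <- s) m x in M_gt0 *.
have zM : z * M = \sum_(x <- s) m x * x.
  apply/eqP; rewrite -subr_eq0 mulr_sumr -sumrB -[X in _ == X]balanced.
  by apply/eqP; apply: eq_bigr => x _; rewrite mulrBr mulrC.
have nth_sum (F : C -> C) : \sum_(i < size s) F s`_i = \sum_(x <- s) F x.
  by rewrite (big_nth 0) big_mkord.
exists (size s), (fun i => m s`_i / M), (fun i => s`_i); split.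
  by move=> i; rewrite divr_ge0 // ltW ?m_gt0 ?mem_nth.
split; first by move=> i; apply/Ps/mem_nth.
rewrite (nth_sum (fun x => m x / M)) (nth_sum (fun x => m x / M * x)).
rewrite -mulr_suml divff ?gt_eqF //; split=> //.
rewrite (eq_bigr (fun x => m x * x / M)) => [|x _]; last by rewrite mulrAC.
by rewrite -mulr_suml -zM mulfK ?gt_eqF.
Qed.

Lemma in_hull_sum_inv_eq0 P s z :
  (forall x, x \in s -> P x) -> (forall x, x \in s -> z != x) -> s != [::] ->
  \sum_(x <- s) (z - x)^-1 = 0 -> in_hull P z.
Proof.
move=> Ps z_neq s_neq0 sum_eq0.
have m_gt0 x : x \in s -> 0 < `|z - x| ^- 2.
  by move=> xs; rewrite invr_gt0 exprn_gt0 // normr_gt0 subr_eq0 z_neq.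
apply: (in_hull_balanced Ps m_gt0 s_neq0).
(* [|z - x|^-2 (z - x)] is the conjugate of [(z - x)^-1]. *)
transitivity (\sum_(x <- s) (z - x)^-1)^*; last by rewrite sum_eq0 conjC0.
rewrite rmorph_sum; apply: eq_big_seq => x xs.
by rewrite invC_norm rmorphM /= geC0_conj ?conjCK // ltW ?m_gt0.
Qed.

Lemma horner_deriv_prod_XsubC s z : (forall x, x \in s -> z != x) ->
  (\prod_(x <- s) ('X - x%:P))^`().[z] =
  (\prod_(x <- s) ('X - x%:P)).[z] * \sum_(x <- s) (z - x)^-1.
Proof.
elim: s => [|a s IH] z_neq; first by rewrite !big_nil derivC !hornerE.
have za : z - a != 0 by rewrite subr_eq0 z_neq ?mem_head.
rewrite !big_cons derivM derivXsubC hornerD !hornerM hornerXsubC hornerE IH.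
  by field.
by move=> x xs; rewrite z_neq // inE xs orbT.
Qed.

Theorem gauss_lucas p z : (1 < size p)%N -> p^`().[z] = 0 -> in_hull (root p) z.
Proof.
move=> p_nonconst dp_z.
have [pz | npz] := boolP (root p z); first exact: in_hull_point.
have [s p_split] := closed_field_poly_normal p.
have p_neq0 : p != 0 by rewrite -size_poly_gt0 (ltn_trans _ p_nonconst).
have roots_s x : x \in s -> root p x.
  by move=> xs; rewrite p_split rootZ ?lead_coef_eq0 // root_prod_XsubC.
have z_neq x : x \in s -> z != x.
  by move=> xs; apply: contraNneq npz => ->; apply: roots_s.
apply: (in_hull_sum_inv_eq0 roots_s z_neq).
  rewrite -size_eq0; move: p_nonconst.
  by rewrite p_split size_scale ?lead_coef_eq0 // size_prod_XsubC; case: (size s).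
move: dp_z npz; rewrite p_split derivZ /root !hornerZ horner_deriv_prod_XsubC //.
by rewrite mulrA => /eqP; rewrite mulf_eq0 => /orP [/eqP -> | /eqP ->]; rewrite ?eqxx.
Qed.

End GaussLucas.

Section CayleyDicksonAlgebra.
Variable R : realType.
Implicit Types (a b : R).
Local Notation A n := (CD R n).

Lemma cdaddC n (x y : A n) : cdadd x y = cdadd y x.
Proof. by elim: n x y => [|n IH] /= x y; [exact: addrC | rewrite IH (IH x.2)]. Qed.

Lemma cdaddA n (x y z : A n) : cdadd x (cdadd y z) = cdadd (cdadd x y) z.
Proof. by elim: n x y z => [|n IH] /= x y z; [exact: addrA | rewrite IH (IH x.2)]. Qed.

Lemma cdadd0l n (x : A n) : cdadd (cdzero R n) x = x.
Proof. by elim: n x => [|n IH] /= x; [exact: add0r | rewrite !IH; case: x]. Qed.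

Lemma cdadd0r n (x : A n) : cdadd x (cdzero R n) = x.
Proof. by rewrite cdaddC cdadd0l. Qed.

Lemma cdaddACA n (x y z t : A n) :
  cdadd (cdadd x y) (cdadd z t) = cdadd (cdadd x z) (cdadd y t).
Proof. by rewrite -!cdaddA (cdaddA y) (cdaddC y) -cdaddA. Qed.

Lemma cdscaleDr n a (x y : A n) :
  cdscale a (cdadd x y) = cdadd (cdscale a x) (cdscale a y).
Proof. by elim: n x y => [|n IH] /= x y; [exact: mulrDr | rewrite !IH]. Qed.

Lemma cdscaleDl n a b (x : A n) :
  cdscale (a + b) x = cdadd (cdscale a x) (cdscale b x).
Proof. by elim: n x => [|n IH] /= x; [exact: mulrDl | rewrite !IH]. Qed.

Lemma cdscaleA n a b (x : A n) : cdscale a (cdscale b x) = cdscale (a * b) x.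
Proof. by elim: n x => [|n IH] /= x; [exact: mulrA | rewrite !IH]. Qed.

Lemma cdscale1 n (x : A n) : cdscale 1 x = x.
Proof. by elim: n x => [|n IH] /= x; [exact: mul1r | rewrite !IH; case: x]. Qed.

Lemma cdscale0 n (x : A n) : cdscale 0 x = cdzero R n.
Proof. by elim: n x => [|n IH] /= x; [exact: mul0r | rewrite !IH]. Qed.

Lemma cdscaler0 n a : cdscale a (cdzero R n) = cdzero R n.
Proof. by rewrite -(cdscale0 (cdzero R n)) cdscaleA mulr0. Qed.

Lemma cdoppE n (x : A n) : cdopp x = cdscale (-1) x.
Proof. by elim: n x => [|n IH] /= x; [rewrite mulN1r | rewrite !IH]. Qed.

Lemma cdaddN n (x : A n) : cdadd x (cdscale (-1) x) = cdzero R n.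
Proof. by rewrite -{1}(cdscale1 x) -cdscaleDl subrr cdscale0. Qed.

Lemma cdrealE n a : cdreal n a = cdscale a (cdone R n).
Proof.
elim: n a => [|n IH] /= a; first by rewrite mulr1.
by rewrite /cdone /= !IH !cdscaleA mulr0 mulr1.
Qed.

Lemma cdconjD n (x y : A n) : cdconj (cdadd x y) = cdadd (cdconj x) (cdconj y).
Proof. by elim: n x y => [|n IH] //= x y; rewrite IH !cdoppE cdscaleDr. Qed.

Lemma cdconjZ n a (x : A n) : cdconj (cdscale a x) = cdscale a (cdconj x).
Proof. by elim: n x => [|n IH] //= x; rewrite IH !cdoppE !cdscaleA mulrC. Qed.

Lemma cdconjK n (x : A n) : cdconj (cdconj x) = x.
Proof.
elim: n x => [|n IH] //= x.
by rewrite IH !cdoppE cdscaleA mulrNN mulr1 cdscale1; case: x.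
Qed.

Lemma cdconj1 n : cdconj (cdone R n) = cdone R n.
Proof.
elim: n => [|n IH] //=.
by rewrite /cdone /= -/(cdone R n) IH cdoppE -/(cdzero R n) cdscaler0.
Qed.

Lemma cdconj0 n : cdconj (cdzero R n) = cdzero R n.
Proof. by rewrite -{1}(cdscale0 (cdone R n)) cdconjZ cdscale0. Qed.

Lemma cdmulD n :
  (forall x y z : A n, cdmul (cdadd x y) z = cdadd (cdmul x z) (cdmul y z)) /\
  (forall x y z : A n, cdmul x (cdadd y z) = cdadd (cdmul x y) (cdmul x z)).
Proof.
elim: n => [|n [IHl IHr]]; first by split=> x y z /=; [exact: mulrDl | exact: mulrDr].
split=> [[x1 x2] [y1 y2] [z1 z2]|[x1 x2] [y1 y2] [z1 z2]] /=.
  by rewrite !IHl !IHr !cdoppE cdscaleDr; congr pair; apply: cdaddACA.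
by rewrite !cdconjD !IHl !IHr !cdoppE cdscaleDr; congr pair; apply: cdaddACA.
Qed.

Lemma cdmulDl n (x y z : A n) : cdmul (cdadd x y) z = cdadd (cdmul x z) (cdmul y z).
Proof. by case: (cdmulD n). Qed.

Lemma cdmulDr n (x y z : A n) : cdmul x (cdadd y z) = cdadd (cdmul x y) (cdmul x z).
Proof. by case: (cdmulD n). Qed.

Lemma cdmulZ n :
  (forall a (x y : A n), cdmul (cdscale a x) y = cdscale a (cdmul x y)) /\
  (forall a (x y : A n), cdmul x (cdscale a y) = cdscale a (cdmul x y)).
Proof.
elim: n => [|n [IHl IHr]]; first by split=> a x y /=; [rewrite mulrA | rewrite mulrCA].
by split=> a [x1 x2] [y1 y2] /=;
  rewrite ?cdconjZ !IHl !IHr !cdoppE !cdscaleDr !cdscaleA mulN1r mulrN1.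
Qed.

Lemma cdmulZl n a (x y : A n) : cdmul (cdscale a x) y = cdscale a (cdmul x y).
Proof. by case: (cdmulZ n). Qed.

Lemma cdmulZr n a (x y : A n) : cdmul x (cdscale a y) = cdscale a (cdmul x y).
Proof. by case: (cdmulZ n). Qed.

Lemma cdmul0l n (x : A n) : cdmul (cdzero R n) x = cdzero R n.
Proof. by rewrite -{1}(cdscale0 (cdzero R n)) cdmulZl cdscale0. Qed.

Lemma cdmul0r n (x : A n) : cdmul x (cdzero R n) = cdzero R n.
Proof. by rewrite -{1}(cdscale0 (cdzero R n)) cdmulZr cdscale0. Qed.

Lemma cdmul1 n :
  (forall x : A n, cdmul (cdone R n) x = x) /\ (forall x : A n, cdmul x (cdone R n) = x).
Proof.
elim: n => [|n [IHl IHr]]; first by split=> x /=; rewrite ?mul1r ?mulr1.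
have -> : cdone R n.+1 = (cdone R n, cdzero R n) by [].
split=> [[x1 x2]|[x1 x2]] /=.
  by rewrite IHl IHr cdmul0r cdoppE cdscaler0 cdadd0r cdmul0l cdadd0r.
by rewrite IHr cdconj1 IHr cdconj0 cdmul0l cdoppE cdscaler0 cdadd0r cdmul0l cdadd0l.
Qed.

Lemma cdmul1l n (x : A n) : cdmul (cdone R n) x = x.
Proof. by case: (cdmul1 n). Qed.

Lemma cdmul1r n (x : A n) : cdmul x (cdone R n) = x.
Proof. by case: (cdmul1 n). Qed.

Lemma cdinnerC n (x y : A n) : cdinner x y = cdinner y x.
Proof. by elim: n x y => [|n IH] /= x y; [exact: mulrC | rewrite IH (IH x.2)]. Qed.

Lemma cdinnerDl n (x y z : A n) : cdinner (cdadd x y) z = cdinner x z + cdinner y z.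
Proof. by elim: n x y z => [|n IH] /= x y z; [exact: mulrDl | rewrite !IH addrACA]. Qed.

Lemma cdinnerZl n a (x y : A n) : cdinner (cdscale a x) y = a * cdinner x y.
Proof. by elim: n x y => [|n IH] /= x y; [rewrite mulrA | rewrite !IH mulrDr]. Qed.

Lemma cdinnerDr n (x y z : A n) : cdinner z (cdadd x y) = cdinner z x + cdinner z y.
Proof. by rewrite !(cdinnerC z) cdinnerDl. Qed.

Lemma cdinnerZr n a (x y : A n) : cdinner y (cdscale a x) = a * cdinner y x.
Proof. by rewrite !(cdinnerC y) cdinnerZl. Qed.

Lemma cdinner0l n (y : A n) : cdinner (cdzero R n) y = 0.
Proof. by rewrite -(cdscale0 (cdzero R n)) cdinnerZl mul0r. Qed.

Lemma cdinner0r n (y : A n) : cdinner y (cdzero R n) = 0.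
Proof. by rewrite cdinnerC cdinner0l. Qed.

Lemma cdinner11 n : cdinner (cdone R n) (cdone R n) = 1.
Proof.
elim: n => [|n IH] /=; first exact: mulr1.
by rewrite /cdone /= -/(cdone R n) IH -/(cdzero R n) cdinner0l addr0.
Qed.

Lemma cdinner_ge0 n (x : A n) : 0 <= cdinner x x.
Proof. by elim: n x => [|n IH] /= x; [exact: sqr_ge0 | exact: addr_ge0]. Qed.

Lemma cdinner_eq0 n (x : A n) : cdinner x x = 0 -> x = cdzero R n.
Proof.
elim: n x => [|n IH] /= x; first by move/eqP; rewrite mulf_eq0 orbb => /eqP.
move/eqP; rewrite paddr_eq0 ?cdinner_ge0 // => /andP [/eqP/IH x1_0 /eqP/IH x2_0].
by case: x x1_0 x2_0 => /= x1 x2 -> ->.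
Qed.

Lemma cdtrE n (x : A n) :
  cdadd x (cdconj x) = cdscale (2 * cdinner x (cdone R n)) (cdone R n).
Proof.
elim: n x => [|n IH] /= x; first by rewrite /cdone /= !mulr1 mulr_natl mulr2n.
rewrite /cdone /= -/(cdone R n) -/(cdzero R n) IH cdinner0r addr0 cdscaler0.
by rewrite cdoppE cdaddN.
Qed.

Lemma cdnormE n (x : A n) : cdmul (cdconj x) x = cdscale (cdinner x x) (cdone R n).
Proof.
elim: n x => [|n IH] /= x; first by rewrite mulr1.
rewrite /cdone /= -/(cdone R n) -/(cdzero R n) cdscaler0 IH !cdoppE cdmulZr cdmulZl.
by rewrite cdscaleA mulrNN mulr1 IH cdscale1 -cdscaleDl cdaddN.
Qed.

Lemma cdinner_mul n :
  (forall x y z : A n, cdinner (cdmul x y) z = cdinner x (cdmul z (cdconj y))) /\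
  (forall x y z : A n, cdinner (cdmul x y) z = cdinner y (cdmul (cdconj x) z)).
Proof.
elim: n => [|n [IHr IHl]]; first by split=> x y z /=; ring.
split=> [[a b] [c d] [e f]|[a b] [c d] [e f]] /=;
  rewrite !cdoppE ?cdconjZ ?cdconjK ?cdmulZl ?cdmulZr;
  rewrite !cdinnerDl !cdinnerDr ?cdinnerZl ?cdinnerZr.
  have := IHr a c e; have := IHl d a f.
  have := IHl (cdconj d) b e; have := IHr b (cdconj c) f.
  rewrite !cdconjK; lra.
have := IHl a c e; have := IHr d a f; have := IHl (cdconj d) b e.
have := IHr b (cdconj c) f; have := IHl (cdconj f) b c; have := IHr d e b.
rewrite !cdconjK (cdinnerC (cdmul (cdconj f) b)) (cdinnerC (cdmul d e)); lra.
Qed.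

Lemma cdinner_mulr n (x y z : A n) :
  cdinner (cdmul x y) z = cdinner x (cdmul z (cdconj y)).
Proof. by case: (cdinner_mul n). Qed.

Lemma cdinner_mull n (x y z : A n) :
  cdinner (cdmul x y) z = cdinner y (cdmul (cdconj x) z).
Proof. by case: (cdinner_mul n). Qed.

End CayleyDicksonAlgebra.

Definition embC (R : realType) n (J : CD R n) (z : R[i]) : CD R n :=
  cdadd (cdscale (complex.Re z) (cdone R n)) (cdscale (complex.Im z) J).

Definition coordC (R : realType) n (J a : CD R n) : R[i] :=
  Complex (cdinner a (cdone R n)) (cdinner a J).

Definition coordCpoly (R : realType) n (J : CD R n) (f : seq (CD R n)) : {poly R[i]} :=
  Poly (map (coordC J) f).

Section ImaginaryUnit.
Variables (R : realType) (n : nat) (J : CD R n).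
Hypothesis J_unit : imag_unit J.

Lemma imag_unit_conj : cdconj J = cdscale (-1) J.
Proof.
case: J_unit => trJ _; rewrite /cdtr in trJ.
by rewrite -[cdconj J]cdadd0l -(cdaddN J) (cdaddC J) -cdaddA trJ cdadd0r.
Qed.

Lemma imag_unit_sqr : cdmul J J = cdscale (-1) (cdone R n).
Proof.
case: J_unit => _; rewrite /cdnorm imag_unit_conj cdmulZl => <-.
by rewrite cdscaleA mulrNN mulr1 cdscale1.
Qed.

Lemma imag_unit_mul_conj : cdmul J (cdconj J) = cdone R n.
Proof.
by rewrite imag_unit_conj cdmulZr imag_unit_sqr cdscaleA mulrNN mulr1 cdscale1.
Qed.

Lemma imag_unit_inner1 : cdinner J (cdone R n) = 0.
Proof.
case: J_unit => + _; rewrite /cdtr cdtrE.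
move=> /(congr1 (fun a => cdinner a (cdone R n))).
rewrite cdinnerZl cdinner11 cdinner0l mulr1 => /eqP.
by rewrite mulf_eq0 pnatr_eq0 => /eqP.
Qed.

Lemma imag_unit_innerJJ : cdinner J J = 1.
Proof.
case: J_unit => _ nJ; have := cdinner_mull (cdconj J) J (cdone R n).
by rewrite cdconjK cdmul1r -/(cdnorm J) nJ cdinner11.
Qed.

Lemma proj_CIE a : proj_CI J a = embC J (coordC J a).
Proof. by []. Qed.

Lemma coordC_embC : cancel (embC J) (coordC J).
Proof.
case=> x y; rewrite /coordC /embC /= !cdinnerDl !cdinnerZl cdinner11.
by rewrite imag_unit_innerJJ (cdinnerC _ J) imag_unit_inner1 !mulr0 !mulr1 addr0 add0r.
Qed.

Lemma embC_inj : injective (embC J).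
Proof. exact: can_inj coordC_embC. Qed.

Lemma coordCD a b : coordC J (cdadd a b) = coordC J a + coordC J b.
Proof. by rewrite /coordC !cdinnerDl. Qed.

Lemma coordCZ x a : coordC J (cdscale x a) = x%:C%C * coordC J a.
Proof.
rewrite /coordC !cdinnerZl; apply/eqP.
by rewrite eq_complex /= !mul0r subr0 addr0 !eqxx.
Qed.

Lemma coordC0 : coordC J (cdzero R n) = 0.
Proof. by rewrite /coordC !cdinner0l. Qed.

Lemma embCD z w : embC J (z + w) = cdadd (embC J z) (embC J w).
Proof. by case: z w => [a b] [c d]; rewrite /embC /= !cdscaleDl cdaddACA. Qed.

Lemma embC0 : embC J 0 = cdzero R n.
Proof. by rewrite /embC /= !cdscale0 cdadd0l. Qed.

Lemma embC1 : embC J 1 = cdone R n.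
Proof. by rewrite /embC /= cdscale0 cdadd0r cdscale1. Qed.

Lemma embCZ x z : embC J (x%:C%C * z) = cdscale x (embC J z).
Proof. by case: z => a b; rewrite /embC /= !mul0r subr0 addr0 cdscaleDr !cdscaleA. Qed.

Lemma embCM z w : embC J (z * w) = cdmul (embC J z) (embC J w).
Proof.
case: z w => [a b] [c d]; rewrite /embC /=.
rewrite !cdmulDl !cdmulDr !cdmulZl !cdmulZr cdmul1l cdmul1r imag_unit_sqr cdmul1l.
rewrite !cdscaleA !cdscaleDl cdaddACA; congr cdadd; rewrite cdaddC; congr cdadd.
by rewrite mulrN1.
Qed.

Lemma coordC_mul_embC a w : coordC J (cdmul a (embC J w)) = coordC J a * w.
Proof.
case: w => x y; rewrite /coordC /embC /= cdmulDr !cdmulZr cdmul1r !cdinnerDl !cdinnerZl.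
rewrite !cdinner_mulr cdmul1l imag_unit_mul_conj imag_unit_conj cdinnerZr.
by apply/eqP; rewrite eq_complex /=; apply/andP; split; apply/eqP; ring.
Qed.

Lemma cdpow_embC z k : cdpow (embC J z) k = embC J (z ^+ k).
Proof. by elim: k => [|k IH] /=; rewrite ?embC1 // IH exprS embCM. Qed.

Lemma coordC_sum I (r : seq I) (F : I -> CD R n) :
  coordC J (\big[@cdadd R n/cdzero R n]_(i <- r) F i) = \sum_(i <- r) coordC J (F i).
Proof. exact: (big_morph _ coordCD coordC0). Qed.

Lemma embC_sum I (r : seq I) (F : I -> R[i]) :
  embC J (\sum_(i <- r) F i) = \big[@cdadd R n/cdzero R n]_(i <- r) embC J (F i).
Proof. exact: (big_morph _ embCD embC0). Qed.

Lemma coef_coordCpoly f k : (coordCpoly J f)`_k = coordC J (nth (cdzero R n) f k).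
Proof.
rewrite coef_Poly; have [kf | fk] := ltnP k (size f).
  by rewrite (nth_map (cdzero R n)).
by rewrite !nth_default ?size_map ?coordC0.
Qed.

Lemma horner_coordCpoly f z :
  (coordCpoly J f).[z] = \sum_(i < size f) (coordCpoly J f)`_i * z ^+ i.
Proof.
by rewrite (@horner_coef_wide _ (size f)) // (leq_trans (size_Poly _)) ?size_map.
Qed.

Lemma coordC_cdeval f z : coordC J (cdeval f (embC J z)) = (coordCpoly J f).[z].
Proof.
rewrite /cdeval coordC_sum horner_coordCpoly; apply: eq_bigr => i _.
by rewrite cdpow_embC coordC_mul_embC coef_coordCpoly.
Qed.

Lemma cdeval_polyI f z : cdeval (polyI J f) (embC J z) = embC J (coordCpoly J f).[z].
Proof.
rewrite /cdeval /polyI horner_coordCpoly embC_sum size_map; apply: eq_bigr => i _.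
by rewrite (nth_map (cdzero R n)) // proj_CIE cdpow_embC embCM coef_coordCpoly.
Qed.

Lemma nth_polyI f k : nth (cdzero R n) (polyI J f) k = embC J (coordCpoly J f)`_k.
Proof.
rewrite coef_coordCpoly; have [kf | fk] := ltnP k (size f).
  by rewrite (nth_map (cdzero R n)) // proj_CIE.
by rewrite !nth_default ?size_map // coordC0 embC0.
Qed.

Lemma coordCpoly_deriv f : coordCpoly J (cdderiv f) = (coordCpoly J f)^`().
Proof.
apply/polyP => i; rewrite coef_deriv !coef_coordCpoly.
have [ilt | ige] := ltnP i (size f).-1.
  by rewrite /cdderiv nth_mkseq // coordCZ rmorph_nat mulr_natl.
rewrite !nth_default ?coordC0 ?mul0rn ?size_mkseq //.
by move: ige; case: (size f).
Qed.

End ImaginaryUnit.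

Lemma in_CI_embC (R : realType) n (J : CD R n) z : in_CI J (embC J z).
Proof. by exists (complex.Re z), (complex.Im z); rewrite cdrealE. Qed.

Lemma imag_unit_e1 (R : realType) m : imag_unit ((cdzero R m, cdone R m) : CD R m.+1).
Proof.
split; first by rewrite /cdtr /= cdconj0 cdadd0l cdoppE cdaddN.
rewrite /cdnorm /= cdconj0 cdmul0l !cdoppE cdconj1 cdmulZr cdmul1l cdscaleA mulrNN mulr1.
by rewrite cdadd0l cdscale1 !cdmul0r cdadd0l.
Qed.

(* r = a + v with v orthogonal to 1; take J = v / |v|, or J = e1 when v = 0. *)
Lemma exists_imag_unit_embC (R : realType) m (r : CD R m.+1) :
  exists J z, imag_unit J /\ r = embC J z.
Proof.
pose a := cdinner r (cdone R m.+1).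
pose v := cdadd r (cdscale (-1) (cdscale a (cdone R m.+1))).
have rE : r = cdadd (cdscale a (cdone R m.+1)) v.
  by rewrite /v cdaddA (cdaddC _ r) -cdaddA cdaddC cdaddN cdadd0l.
have v_perp1 : cdinner v (cdone R m.+1) = 0.
  by rewrite /v cdinnerDl !cdinnerZl cdinner11 mulr1 /a; ring.
have [vv0 | vv_neq0] := eqVneq (cdinner v v) 0.
  exists (cdzero R m, cdone R m), a%:C%C; split; first exact: imag_unit_e1.
  by rewrite {1}rE (cdinner_eq0 vv0) cdadd0r /embC [complex.Im _]/= cdscale0 cdadd0r.
have vv_gt0 : 0 < cdinner v v by rewrite lt_def vv_neq0 cdinner_ge0.
set b := Num.sqrt (cdinner v v).
have b_neq0 : b != 0 by rewrite gt_eqF // sqrtr_gt0.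
exists (cdscale b^-1 v), (a +i* b)%C; split; last first.
  by rewrite /embC [complex.Im _]/= cdscaleA divff // cdscale1 {1}rE.
split; first by rewrite /cdtr cdconjZ -cdscaleDr cdtrE v_perp1 mulr0 cdscale0 cdscaler0.
rewrite /cdnorm cdconjZ cdmulZl cdmulZr cdnormE !cdscaleA -[cdinner v v]sqr_sqrtr ?ltW //.
by rewrite -/b expr2 mulrA mulfVK // mulVf // cdscale1.
Qed.

Section Snail.
Variables (R : realType) (n : nat) (J : CD R n) (f : seq (CD R n)).
Hypothesis J_unit : imag_unit J.

Lemma nonconstant_polyI : nonconstant (polyI J f) <-> (1 < size (coordCpoly J f))%N.
Proof.
split=> [[k [k_gt0 fk_neq0]] | size_gt1].
  rewrite ltnNge; apply: contra_notN fk_neq0 => size_le1.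
  by rewrite nth_polyI nth_default ?embC0 // (leq_trans size_le1).
exists (size (coordCpoly J f)).-1; split; first by case: size size_gt1 => [|[]].
rewrite nth_polyI -lead_coefE -(embC0 J) => /(embC_inj J_unit)/eqP.
by rewrite lead_coef_eq0 => /eqP p0; rewrite p0 size_poly0 in size_gt1.
Qed.

Lemma in_convex_hull_embC (P : R[i] -> Prop) (Q : CD R n -> Prop) z :
  (forall x, P x -> Q (embC J x)) -> in_hull P z -> in_convex_hull Q (embC J z).
Proof.
move=> PQ [k [w [zeta [w_ge0 [Pzeta [w_sum1 ->]]]]]].
have w_real i : (complex.Re (w i))%:C%C = w i by rewrite RRe_real ?ger0_real.
exists k, (fun i => complex.Re (w i)), (fun i => embC J (zeta i)); split.
  by move=> i; move: (w_ge0 i); rewrite -w_real lecE /= => /andP [].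
split; first by move=> i; apply: PQ.
split.
  apply: (@complexI R); rewrite rmorph_sum rmorph1 -w_sum1.
  by apply: eq_bigr => i _; apply: w_real.
by rewrite embC_sum; apply: eq_bigr => i _; rewrite -embCZ w_real.
Qed.

Lemma K_CI_embC z : (coordCpoly J f)^`().[z] = 0 -> K_CI J f (embC J z).
Proof.
move=> dp_z; rewrite /K_CI nonconstant_polyI.
have [size_gt1 | size_le1] := ltnP 1 (size (coordCpoly J f)); last first.
  by right; split; last exact: in_CI_embC.
left; split=> //; apply: in_convex_hull_embC (gauss_lucas size_gt1 dp_z) => x /eqP root_x.
by split; [apply: in_CI_embC | rewrite cdeval_polyI // root_x embC0].
Qed.

End Snail.

Theorem theorem4p8 (R : realType) (n : nat) (f : seq (CD R n.+1))
  (r : CD R n.+1) :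
  cdeval (cdderiv f) r = cdzero R n.+1 -> snail f r.
Proof.
have [J [z [J_unit ->]]] := exists_imag_unit_embC r.
move=> df_r; exists J; split=> //; apply: K_CI_embC => //.
by rewrite -coordCpoly_deriv -coordC_cdeval // df_r coordC0.
Qed.
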